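(* Let $(X,\mathcal{M},\mu)$ be a measure space and $\Phi$ an $N^*$-function with complementary $N^*$-function $\widehat\Phi$. Then for every $f\in L_\Phi(X)$ and $g\in L_{\widehat\Phi}(X)$, $$\int_X\Phi(f)\,\widehat\Phi(g)\,d\mu\le\int_X|f|\,d\mu+\int_X|g|\,d\mu .$$
   Context: An $N^*$-function is a function $\Phi:\mathbb{R}\to\mathbb{R}$ of the form $\Phi(x)=\int_0^{|x|}p(t)\,dt<+\infty$ for all $x$, where $p:[0,\infty)\to[0,\infty]$ is right-continuous, positive on $(0,\infty)$, non-increasing, and satisfies $\lim_{t\to0^+}p(t)=+\infty$ and $\lim_{t\to+\infty}p(t)=0$. $\Phi^{-1}:[0,\infty)\to[0,\infty)$ denotes the inverse of $\Phi|_{[0,\infty)}$; it is an $N$-function $M(t)=\int_0^{|t|}m(s)ds$ with $m$ non-decreasing right-continuous. The conjugate $N$-function is $\overline{M}(t)=\int_0^{|t|}\overline m(s)ds$ with $\overline m(t)=\sup\{s: m(s)\le t\}$. The complementary $N^*$-function is $\widehat\Phi=(\overline{\Phi^{-1}})^{-1}$ (inverse on $[0,\infty)$, extended evenly). $L_\Phi(X)$ is the space of (classes modulo a.e. equality of) measurable $f$ with $\int_X\Phi(f)\,d\mu<\infty$. *)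

From HB Require Import structures.
From mathcomp Require Import all_boot all_order all_algebra.
From mathcomp Require Import all_classical all_reals all_analysis.
Set Implicit Arguments. Unset Strict Implicit. Unset Printing Implicit Defensive.
Import Order.TTheory GRing.Theory Num.Theory.
Import numFieldNormedType.Exports.
Local Open Scope classical_set_scope.
Local Open Scope ring_scope.

Section Orlicz.
Variable R : realType.

Definition segm (x : R) : set R := `[0, `|x|]%classic.

(** [p] is an admissible density for an N*-function [Phi] and
    [Phi x = \int_0^{|x|} p t dt < +oo] for all x. [p : [0,oo) -> [0,+oo]]
    is modelled as [R -> \bar R]; only its values on [0,oo) matter. *)
Definition Nstar_density (p : R -> \bar R) :=
  [/\ (forall t, 0 <= t -> (0 <= p t)%E),
      (forall t, 0 < t -> (0 < p t)%E),
      (forall s t, 0 <= s -> s <= t -> (p t <= p s)%E),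
      (forall t, 0 <= t -> (p x @[x --> t ^'+] --> p t)) &
      (p x @[x --> 0 ^'+] --> +oo%E) /\
      (p x @[x --> +oo] --> 0%E)].

Definition Nstar_function (Phi : R -> R) :=
  exists p : R -> \bar R, Nstar_density p /\
    forall x : R, (\int[lebesgue_measure]_(t in segm x) p t < +oo)%E /\
              Phi x = fine (\int[lebesgue_measure]_(t in segm x) p t).

Definition inverse_on_nonneg (F G : R -> R) :=
  (forall x, 0 <= x -> 0 <= F x /\ G (F x) = x) /\
  (forall y, 0 <= y -> 0 <= G y /\ F (G y) = y).

Definition conj_density (m : R -> R) (t : R) : R :=
  sup [set s | 0 <= s /\ m s <= t].

Definition conj_Nfunction (m : R -> R) (t : R) : R :=
  fine (\int[lebesgue_measure]_(s in segm t) (conj_density m s)%:E)%E.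

(** [Phihat] is the complementary N*-function of [Phi]:
    M = Phi^{-1} (on [0,oo)) is written M t = \int_0^{|t|} m with m
    non-decreasing and right-continuous on [0,oo); then Phihat is the
    inverse on [0,oo) of the conjugate N-function Mbar, extended evenly. *)
Definition complementary_Nstar (Phi Phihat : R -> R) :=
  exists (M m : R -> R),
    [/\ inverse_on_nonneg Phi M,
        (forall t : R, M t = fine (\int[lebesgue_measure]_(s in segm t) (m s)%:E)%E),
        (forall s t, 0 <= s -> s <= t -> m s <= m t),
        (forall t, 0 <= t -> (m x @[x --> t ^'+] --> m t)) &
        inverse_on_nonneg (conj_Nfunction m) Phihat /\
        (forall x, Phihat (- x) = Phihat x)].

Definition in_LPhi d (T : measurableType d) (mu : {measure set T -> \bar R})
  (Phi : R -> R) (f : T -> R) :=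
  measurable_fun setT f /\ (\int[mu]_x (Phi (f x))%:E < +oo)%E.

End Orlicz.

From HB Require Import structures.
From mathcomp Require Import all_boot all_order all_algebra.
From mathcomp Require Import all_classical all_reals all_analysis.
From mathcomp Require Import measurable_realfun ring lra.
Import Order.TTheory GRing.Theory Num.Theory.
Import numFieldNormedType.Exports.
Local Open Scope classical_set_scope.
Local Open Scope ring_scope.

(** The inequality is integrated from the pointwise bound
       0 <= Phi a * Phihat b <= |a| + |b|,
   which is Young's inequality  u v <= M u + Mbar v  for the N-function
   M = Phi^{-1} = \int_0 m  and its conjugate  Mbar = \int_0 mbar,  applied to
   u = Phi |a|, v = Phihat |b|, so that M u = |a| and Mbar v = |b|.

   Young's inequality is proved by Riemann sums: for u = n h, the lower sum
   h \sum_{k<n} m (k h) bounds M u from below, and since mbar >= k h on the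
   band where m (k h) <= t < m ((k+1) h), Mbar v is bounded below by
   h (n v - \sum_{k<n} m ((k+1) h)).  Adding, the sums telescope to
   u v - h (m u - m 0), and letting n -> oo gives the inequality. *)

(** Monotonicity of the integral of nonnegative functions; no measurability
    is needed since the integral of a nonnegative function is a supremum over
    simple functions below it. *)
Lemma ge0_le_integral_nonmeas d (T : measurableType d) (R : realType)
    (mu : {measure set T -> \bar R}) (D : set T) (f1 f2 : T -> \bar R) :
  (forall x, D x -> (0 <= f1 x)%E) -> (forall x, D x -> (f1 x <= f2 x)%E) ->
  (\int[mu]_(x in D) f1 x <= \int[mu]_(x in D) f2 x)%E.
Proof.
move=> f1_ge0 f12; rewrite !(integral_mkcond D).
have f1D_ge0 x : (0 <= (f1 \_ D) x)%E.
  by rewrite /patch; case: ifP => // /set_mem; exact: f1_ge0.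
have f12D x : ((f1 \_ D) x <= (f2 \_ D) x)%E.
  by rewrite /patch; case: ifP => // /set_mem; exact: f12.
have f2D_ge0 x : (0 <= (f2 \_ D) x)%E by exact: le_trans (f12D x).
rewrite !ge0_integralTE//; apply: ereal_sup_le => _ [s /= s_le <-].
by exists s => //= x; exact: le_trans (s_le x) (f12D x).
Qed.

Lemma integral_cst_itv (R : realType) (c a b : R) (rb : bool) : a <= b ->
  (\int[lebesgue_measure]_(x in [set` Interval (BLeft a) (BSide rb b)])
     (cst c%:E) x = (c * (b - a))%:E)%E.
Proof.
move=> ab; rewrite integral_cst //=.
rewrite (lebesgue_measure_itv (Interval (BLeft a) (BSide rb b))) /=.
case: ifPn => [_|]; first by rewrite -EFinD -EFinM.
rewrite lte_fin -leNgt => ba.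
by rewrite (_ : b = a) ?subrr ?mulr0 ?mule0 //; apply/le_anti; rewrite ba ab.
Qed.

Lemma integral_itv_le_bound (R : realType) (h : R -> R) (c a b : R) :
  a <= b -> (forall x, a <= x <= b -> 0 <= h x <= c) ->
  (\int[lebesgue_measure]_(x in `[a, b]) (h x)%:E <= (c * (b - a))%:E)%E.
Proof.
move=> ab hc; rewrite -(@integral_cst_itv _ c _ _ false ab).
apply: ge0_le_integral_nonmeas => x /=; rewrite in_itv /= => /hc /andP[h0 hx].
  by rewrite lee_fin.
by rewrite lee_fin.
Qed.

Lemma integral_step_lower_bound (R : realType) (h : R -> R) (p e : nat -> R)
    (N : nat) :
  measurable_fun setT h -> (forall x, 0 <= h x) ->
  (forall k, p k <= p k.+1) -> (forall k, 0 <= e k) ->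
  (forall k x, p k <= x < p k.+1 -> e k <= h x) ->
  ((\sum_(k < N) e k * (p k.+1 - p k))%:E <=
    \int[lebesgue_measure]_(x in `[p 0%N, p N[) (h x)%:E)%E.
Proof.
move=> mh h_ge0 p_nd e_ge0 eh.
have p_mono := (nondecreasing_seqP p).1 p_nd.
elim: N => [|N IH].
  by rewrite big_ord0; apply: integral_ge0 => x _; rewrite lee_fin.
rewrite big_ord_recr /= EFinD (@itv_bndbnd_setU _ _ _ (BLeft (p N)));
  [|by rewrite bnd_simp p_mono|by rewrite bnd_simp].
rewrite ge0_integral_setU //; last 3 first.
- by apply/measurable_EFinP; exact: measurable_funTS.
- by move=> x _; rewrite lee_fin.
- apply/disj_setPS => x [] /=; rewrite !in_itv /= => /andP[_ xpN] /andP[pNx _].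
  by move: (lt_le_trans xpN pNx); rewrite ltxx.
apply: leeD => //; rewrite -(@integral_cst_itv _ _ _ _ true (p_nd N)).
apply: ge0_le_integral_nonmeas => x /=; rewrite in_itv /= => xN.
  by rewrite lee_fin.
by rewrite lee_fin eh.
Qed.

Lemma segm_itv (R : realType) (w : R) : 0 <= w -> segm w = `[0, w]%classic.
Proof. by move=> w0; rewrite /segm ger0_norm. Qed.

Lemma le_fine (R : realType) (x : R) (y : \bar R) :
  (x%:E <= y)%E -> (y < +oo)%E -> x <= fine y.
Proof. by case: y => [r| |] //=; rewrite lee_fin. Qed.

Lemma sum_by_parts (R : realType) (c : R) (q : nat -> R) (N : nat) :
  \sum_(k < N) (k%:R * c) * (q k.+1 - q k) =
  c * (N%:R * q N - \sum_(k < N) q k.+1).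
Proof.
elim: N => [|N IH]; first by rewrite !big_ord0 mul0r subr0 mulr0.
by rewrite !big_ord_recr /= IH -addn1 natrD; ring.
Qed.

Lemma le_of_le_add_div (R : realType) (x y K : R) : 0 <= K ->
  (forall n : nat, (0 < n)%N -> x <= y + K / n%:R) -> x <= y.
Proof.
move=> K0 H; apply/ler_addgt0Pr => e e0.
pose n := (Num.truncn (K / e)).+1.
apply: (le_trans (H n _)) => //; rewrite lerD2l.
have n0 : 0 < n%:R :> R by rewrite ltr0n.
rewrite ler_pdivrMr // -ler_pdivrMl // mulrC; apply/ltW.
exact: archimedean.Num.Theory.truncnS_gt.
Qed.

Section Young.
Variable R : realType.
Variable m : R -> R.
Hypothesis m_nd : forall s t, 0 <= s -> s <= t -> m s <= m t.
Hypothesis m_ge0 : forall s, 0 <= s -> 0 <= m s.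
Hypothesis m_unbounded : forall t, exists s, 0 <= s /\ t < m s.

Local Notation mbar := (conj_density m).
Local Notation Mint u := (\int[lebesgue_measure]_(s in segm u) (m s)%:E)%E.
Local Notation Mbarint v :=
  (\int[lebesgue_measure]_(s in segm v) (mbar s)%:E)%E.

(** mbar t is a supremum of nonnegative numbers (or 0 by convention). *)
Lemma mbar_ge0 t : 0 <= mbar t.
Proof.
rewrite /conj_density.
have [sup_t|nsup] := pselect (has_sup [set s | 0 <= s /\ m s <= t]).
  have [[s s_in] _] := sup_t.
  by apply: le_trans (proj1 s_in) _; exact: sup_upper_bound.
by rewrite sup_out.
Qed.

Lemma sublevel_bounded t : has_ubound [set s | 0 <= s /\ m s <= t].
Proof.
have [s0 [s00 ts0]] := m_unbounded t.
exists s0 => s [s_ge0 mst]; rewrite leNgt; apply/negP => s0s.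
have := m_nd _ _ s00 (ltW s0s); rewrite leNgt => /negP; apply.
exact: le_lt_trans mst ts0.
Qed.

Lemma mbar_ub s t : 0 <= s -> m s <= t -> s <= mbar t.
Proof. by move=> s0 mst; apply: ub_le_sup; [exact: sublevel_bounded|]. Qed.

Lemma mbar_nd : {homo mbar : x y / x <= y}.
Proof.
move=> x y xy.
have [[s [s0 msx]]|nE] := pselect (exists s, 0 <= s /\ m s <= x).
  apply: ge_sup; first by exists s.
  by move=> r [r0 mrx]; apply: mbar_ub => //; exact: le_trans mrx xy.
rewrite {1}/conj_density; have -> : [set s | 0 <= s /\ m s <= x] = set0.
  by apply/seteqP; split => // r [r0 mrx]; apply: nE; exists r.
by rewrite sup0 mbar_ge0.
Qed.

(** The extension of m by m 0 to the negative reals: nondecreasing on R, hence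
    measurable, and equal to m on [0, oo). *)
Let mext (x : R) : R := m (Order.max x 0).

Let max0_ge0 (x : R) : 0 <= Order.max x 0.
Proof. by rewrite le_max lexx orbT. Qed.

Let mext_nd : {homo mext : x y / x <= y}.
Proof. by move=> x y xy; apply: m_nd; [exact: max0_ge0|exact: le_max2]. Qed.

Let Mint_mext u : 0 <= u ->
  Mint u = (\int[lebesgue_measure]_(s in `[0%R, u]) (mext s)%:E)%E.
Proof.
move=> u0; rewrite segm_itv //; apply: eq_integral => x.
by rewrite inE /= in_itv /= => /andP[x0 _]; rewrite /mext (max_idPl x0).
Qed.

(** M and Mbar are finite: their densities are bounded on bounded intervals. *)
Lemma Mint_fin u : 0 <= u -> (Mint u < +oo)%E.
Proof.
move=> u0; rewrite segm_itv //.
apply: le_lt_trans (@integral_itv_le_bound _ m (m u) _ _ u0 _) (ltry _).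
by move=> x /andP[x0 xu]; rewrite m_ge0 // m_nd.
Qed.

Lemma Mbarint_fin v : 0 <= v -> (Mbarint v < +oo)%E.
Proof.
move=> v0; rewrite segm_itv //.
apply: le_lt_trans (@integral_itv_le_bound _ mbar (mbar v) _ _ v0 _) (ltry _).
by move=> x /andP[x0 xv]; rewrite mbar_ge0 mbar_nd.
Qed.

Lemma lower_sum_M (n : nat) (h : R) : 0 <= h ->
  ((h * \sum_(k < n) m (k%:R * h))%:E <= Mint (n%:R * h))%E.
Proof.
move=> h0; have kh_ge0 k : 0 <= k%:R * h by rewrite mulr_ge0.
have kh_nd k : k%:R * h <= k.+1%:R * h by rewrite ler_wpM2r // ler_nat.
have step k x : k%:R * h <= x < k.+1%:R * h -> m (k%:R * h) <= mext x.
  by move=> /andP[kx _]; apply: m_nd => //; rewrite le_max kx.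
have := @integral_step_lower_bound R mext (fun k => k%:R * h)
  (fun k => m (k%:R * h)) n (nondecreasing_measurable measurableT mext_nd)
  (fun x => m_ge0 _ (max0_ge0 x)) kh_nd (fun k => m_ge0 _ (kh_ge0 k)) step.
have riemann_sum : \sum_(k < n) m (k%:R * h) * (k.+1%:R * h - k%:R * h) =
    h * \sum_(k < n) m (k%:R * h).
  by rewrite mulr_sumr; apply: eq_bigr => k _; rewrite mulrSr; ring.
rewrite mul0r riemann_sum Mint_mext // => le_step.
apply: le_trans le_step _; apply: ge0_subset_integral => //=.
- by apply/measurable_EFinP; exact: nondecreasing_measurable mext_nd.
- by move=> x _; rewrite lee_fin m_ge0.
- by move=> x /=; rewrite !in_itv /= => /andP[-> /ltW].
Qed.

(** Lower bound for Mbar: on the band where m (k h) <= t < m ((k+1) h)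
    (truncated at v), mbar t >= k h; summing by parts gives the bound. *)
Lemma lower_sum_Mbar (n : nat) (h v : R) : 0 <= h -> 0 <= v ->
  ((h * (n%:R * v - \sum_(k < n) m (k.+1%:R * h)))%:E <= Mbarint v)%E.
Proof.
move=> h0 v0; have kh_ge0 k : 0 <= k%:R * h by rewrite mulr_ge0.
pose q k := if (k <= n)%N then Order.min (m (k%:R * h)) v else v.
have q_le_v k : q k <= v.
  by rewrite /q; case: ifP => _; rewrite ?ge_min ?lexx ?orbT.
have q_nd k : q k <= q k.+1.
  rewrite /q; case: (leqP k.+1 n) => [kn|nk]; last exact: q_le_v.
  rewrite (ltnW kn) le_min !ge_min lexx !orbT andbT.
  by rewrite m_nd // ler_wpM2r // ler_nat.
have band k x : q k <= x < q k.+1 -> k%:R * h <= mbar x.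
  move=> /andP[qkx xqk]; have xv := lt_le_trans xqk (q_le_v _).
  move: qkx; rewrite /q; case: ifP => _ => [|vx]; last first.
    by move: (le_lt_trans vx xv); rewrite ltxx.
  rewrite ge_min => /orP[mkx|vx]; first exact: mbar_ub.
  by move: (le_lt_trans vx xv); rewrite ltxx.
have := @integral_step_lower_bound R mbar q (fun k => k%:R * h) n.+1
  (nondecreasing_measurable measurableT mbar_nd) mbar_ge0 q_nd kh_ge0 band.
rewrite sum_by_parts big_ord_recr /= (_ : q n.+1 = v); last by rewrite /q ltnn.
move=> le_step; apply: le_trans (le_trans _ le_step) _.
  rewrite lee_fin ler_wpM2l //.
  rewrite (_ : n.+1%:R * v - _ = n%:R * v - \sum_(k < n) q k.+1); last first.
    by rewrite mulrSr; ring.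
  rewrite lerD2l lerN2; apply: ler_sum => k _.
  by rewrite /q ltn_ord ge_min lexx.
rewrite segm_itv //; apply: ge0_subset_integral => //=.
- by apply/measurable_EFinP; exact: nondecreasing_measurable mbar_nd.
- by move=> x _; rewrite lee_fin mbar_ge0.
- move=> x /=; rewrite !in_itv /= => /andP[qx xv].
  rewrite (ltW (lt_le_trans xv _)) //.
  by rewrite andbT (le_trans _ qx) // /q mul0r le_min m_ge0.
Qed.

Lemma young_approx (u v : R) (n : nat) : 0 <= u -> 0 <= v -> (0 < n)%N ->
  u * v <= fine (Mint u) + conj_Nfunction m v + u * (m u - m 0) / n%:R.
Proof.
move=> u0 v0 n0; pose h := u / n%:R.
have h0 : 0 <= h by rewrite divr_ge0.
have nh : n%:R * h = u.
  by rewrite /h mulrC -mulrA mulVf ?mulr1 // pnatr_eq0 -lt0n.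
have lowM := @le_fine _ _ _ (lower_sum_M n _ h0)
  (Mint_fin _ (mulr_ge0 (ler0n _ n) h0)).
have lowMbar := @le_fine _ _ _ (lower_sum_Mbar n _ _ h0 v0) (Mbarint_fin _ v0).
rewrite nh in lowM.
have telescope :
    \sum_(k < n) m (k.+1%:R * h) - \sum_(k < n) m (k%:R * h) = m u - m 0.
  rewrite -sumrB -(big_mkord xpredT (fun k => m (k.+1%:R * h) - m (k%:R * h))).
  by rewrite (telescope_sumr (fun k => m (k%:R * h))) // mul0r nh.
rewrite mulrAC -/h -telescope -[in u * v]nh.
set A := \sum_(k < n) m (k%:R * h); set B := \sum_(k < n) m (k.+1%:R * h).
have -> : n%:R * h * v = h * A + h * (n%:R * v - B) + h * (B - A) by ring.
by rewrite /conj_Nfunction lerD2r; exact: lerD.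
Qed.

Lemma young (u v : R) : 0 <= u -> 0 <= v ->
  u * v <= fine (Mint u) + conj_Nfunction m v.
Proof.
move=> u0 v0; apply: (@le_of_le_add_div _ _ _ (u * (m u - m 0))).
  by rewrite mulr_ge0 // subr_ge0 m_nd.
by move=> n n0; exact: young_approx.
Qed.

End Young.

(** The density of M = \int_0 m is nonnegative at 0: if m 0 < 0, right
    continuity makes m negative on some [0, t], and then M t < 0. *)
Lemma density_ge0_at0 (R : realType) (m : R -> R) :
  (forall s t, 0 <= s -> s <= t -> m s <= m t) ->
  m x @[x --> 0 ^'+] --> m 0 ->
  (forall t, 0 <= t ->
     0 <= fine (\int[lebesgue_measure]_(s in segm t) (m s)%:E)%E) ->
  0 <= m 0.
Proof.
move=> m_nd m_rc M_ge0; rewrite leNgt; apply/negP => m0_lt0.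
have m_neg : \forall t \near 0^'+, m t < 0 := cvgr_lt _ m_rc _ m0_lt0.
near (0:R)^'+ => t.
have t0 : 0 < t by near: t; exact: nbhs_right_gt.
have mt_lt0 : m t < 0 by near: t; exact: m_neg.
have mx_bounds x : 0 <= x <= t -> - m t <= - m x <= - m 0.
  by move=> /andP[x0 xt]; rewrite !lerN2 !m_nd.
pose J := (\int[lebesgue_measure]_(x in `[0%R, t]) (- m x)%:E)%E.
have J_fin : (J < +oo)%E.
  apply: le_lt_trans (ltry (- m 0 * (t - 0))).
  apply: integral_itv_le_bound (ltW t0) _ => x /mx_bounds /andP[mtx ->].
  by rewrite andbT (le_trans _ mtx) // oppr_ge0 ltW.
have J_gt0 : (0 < J)%E.
  apply: (@lt_le_trans _ _ ((- m t) * (t - 0))%:E).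
    by rewrite lte_fin subr0 mulr_gt0 // oppr_gt0.
  rewrite -(@integral_cst_itv _ _ _ _ false (ltW t0)).
  apply: ge0_le_integral_nonmeas => x /=.
    by move=> _; rewrite lee_fin oppr_ge0 ltW.
  by rewrite in_itv /= lee_fin => /mx_bounds /andP[].
have J_fin_num : J \is a fin_num by rewrite ge0_fin_numE ?(ltW J_gt0).
have int_m : (\int[lebesgue_measure]_(s in segm t) (m s)%:E = - J)%E.
  rewrite /J -integralN; last first.
    apply: fin_num_adde_defl; rewrite fin_numN.
    suff -> : (\int[lebesgue_measure]_(x in `[0%R, t])
                ((fun x => (- m x)%:E)^\- x) = 0)%E by [].
    rewrite -(integral0 lebesgue_measure `[0%R, t]%classic); apply: eq_integral.
    apply: ge0_funenegE => x /=; rewrite in_itv /= => /mx_bounds /andP[mtx _].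
    by rewrite lee_fin (le_trans _ mtx) // oppr_ge0 ltW.
  rewrite segm_itv ?(ltW t0) //.
  by apply: eq_integral => x _; rewrite -EFinN opprK.
have := M_ge0 t (ltW t0); rewrite int_m -(fineK J_fin_num) -EFinN /= oppr_ge0.
by rewrite leNgt fine_gt0 // J_gt0 J_fin.
Unshelve. all: by end_near.
Qed.

(** If the conjugate N-function Mbar has a left inverse on [0, oo), then m is
    unbounded: were m <= t on [0, oo), mbar would vanish beyond max t 0, so
    Mbar would take the same value at max t 0 and at max t 0 + 1. *)
Lemma density_unbounded (R : realType) (m Phihat : R -> R) :
  (forall x, 0 <= x -> Phihat (conj_Nfunction m x) = x) ->
  forall t, exists s, 0 <= s /\ t < m s.
Proof.
move=> Mbar_linv t; apply: contrapT => /forallNP m_bounded.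
have m_le_t s : 0 <= s -> m s <= t.
  by move=> s0; rewrite leNgt; apply/negP => ts; apply: (m_bounded s).
pose t1 := Order.max t 0.
have t1_ge0 : 0 <= t1 by rewrite le_max lexx orbT.
have mbar0 x : t1 <= x -> conj_density m x = 0.
  move=> t1x; rewrite /conj_density sup_out // => -[_ [b b_ub]].
  have /b_ub : [set s | 0 <= s /\ m s <= x] (Order.max b 0 + 1).
    split; first by rewrite addr_ge0 // le_max lexx orbT.
    have t_le_x : t <= x by apply: le_trans t1x; rewrite /t1 le_max lexx.
    apply: le_trans (m_le_t _ _) t_le_x.
    by rewrite addr_ge0 // le_max lexx orbT.
  by apply/negP; rewrite -ltNge ltr_pwDr // le_max lexx.
have Mbar_eq : conj_Nfunction m t1 = conj_Nfunction m (t1 + 1).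
  rewrite /conj_Nfunction; congr fine.
  rewrite integral_mkcond [in RHS]integral_mkcond; apply: eq_integral => x _.
  rewrite /patch !segm_itv ?addr_ge0 //.
  case: ifPn => [|/negP x_out1]; case: ifPn => [|/negP x_out2] //=.
  - rewrite !inE /= !in_itv /= => /andP[x0 xt1]; exfalso; apply: x_out2.
    by rewrite inE /= in_itv /= x0 (le_trans xt1) // lerDl.
  - rewrite inE /= in_itv /= => /andP[x0 _]; rewrite mbar0 // leNgt.
    by apply/negP => xt1; apply: x_out1; rewrite inE /= in_itv /= x0 ltW.
have := Mbar_linv t1 t1_ge0; have := Mbar_linv (t1 + 1) (addr_ge0 t1_ge0 ler01).
by rewrite -Mbar_eq => ->; lra.
Qed.

(** Pointwise Young inequality for the complementary pair (Phi, Phihat):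
    with u = Phi |a| and v = Phihat |b| one has M u = |a| and Mbar v = |b|. *)
Lemma Nstar_young (R : realType) (Phi Phihat : R -> R) :
  Nstar_function Phi -> complementary_Nstar Phi Phihat ->
  forall a b : R, 0 <= Phi a * Phihat b <= `|a| + `|b|.
Proof.
move=> [p [_ Phi_int]] [M [m [[Phi_M M_Phi] M_int m_nd m_rc]]].
move=> [[Phihat_Mbar Mbar_Phihat] Phihat_even] a b.
have Phi_norm : Phi a = Phi `|a|.
  by rewrite (Phi_int a).2 (Phi_int `|a|).2 /segm normr_id.
have Phihat_norm : Phihat b = Phihat `|b|.
  have [b0|b0] := leP 0 b; first by rewrite ger0_norm.
  by rewrite ltr0_norm // Phihat_even.
have m0_ge0 : 0 <= m 0.
  apply: density_ge0_at0 m_nd (m_rc 0 (lexx 0)) _ => t t0.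
  by rewrite -M_int; have [] := M_Phi t t0.
have m_ge0 s : 0 <= s -> 0 <= m s.
  by move=> s0; apply: le_trans m0_ge0 (m_nd _ _ (lexx 0) s0).
have m_unb := @density_unbounded R m Phihat (fun x x0 => (Phihat_Mbar x x0).2).
have [u_ge0 Mu] := Phi_M _ (normr_ge0 a).
have [v_ge0 Mbarv] := Mbar_Phihat _ (normr_ge0 b).
rewrite Phi_norm Phihat_norm mulr_ge0 //=.
by have := @young R m m_nd m_ge0 m_unb _ _ u_ge0 v_ge0; rewrite -M_int Mu Mbarv.
Qed.

Theorem mainTheorem4 (d : measure_display) (T : measurableType d) (R : realType)
  (mu : {measure set T -> \bar R}) (Phi Phihat : R -> R) (f g : T -> R) :
  Nstar_function Phi ->
  complementary_Nstar Phi Phihat ->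
  in_LPhi mu Phi f ->
  in_LPhi mu Phihat g ->
  (\int[mu]_x (Phi (f x) * Phihat (g x))%:E
     <= \int[mu]_x (`|f x|)%:E + \int[mu]_x (`|g x|)%:E)%E.
Proof.
move=> Phi_N Phihat_compl [mf _] [mg _].
have m_abs (k : T -> R) : measurable_fun setT k ->
    measurable_fun setT (fun x => (`|k x|)%:E).
  by move=> mk; apply/measurable_EFinP; exact: measurableT_comp.
rewrite -ge0_integralD //; last 2 first; [exact: m_abs..|].
have pointwise x := @Nstar_young R Phi Phihat Phi_N Phihat_compl (f x) (g x).
apply: ge0_le_integral_nonmeas => x _;
  have /andP[prod_ge0 prod_le] := pointwise x.
  by rewrite lee_fin.
by rewrite -EFinD lee_fin.
Qed.
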